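(* Let $R$ be an associative ring with identity, let $a,b,c,y\in R$ and suppose $t=cab$ is regular. Then the following are equivalent: (i) $y$ is the $(b,c)$-inverse of $a$; (ii) $y$ is a hybrid $(b,c)$-inverse of $a$; (iii) $y$ is an annihilator $(b,c)$-inverse of $a$.
   Context: For $a,b,c\in R$, $y$ is the $(b,c)$-inverse of $a$ if $y\in (bRy)\cap(yRc)$, $yab=b$ and $cay=c$ (such $y$ is unique). $y$ is a hybrid $(b,c)$-inverse of $a$ if $yay=y$, $yR=bR$ and $r(y)=r(c)$. $y$ is an annihilator $(b,c)$-inverse of $a$ if $yay=y$, $l(y)=l(b)$ and $r(y)=r(c)$. Here $l(x)=\{z\in R:zx=0\}$, $r(x)=\{z\in R:xz=0\}$, $xR=\{xz:z\in R\}$. An element is regular if $x=xzx$ for some $z\in R$. *)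

From HB Require Import structures.
From mathcomp Require Import all_boot all_order all_algebra.
Set Implicit Arguments. Unset Strict Implicit. Unset Printing Implicit Defensive.
Import GRing.Theory.
Local Open Scope ring_scope.

(* R is an arbitrary associative ring with identity (pzRingType allows 0 = 1). *)

Definition in_rideal (R : pzRingType) (x z : R) : Prop := exists u : R, z = x * u.
Definition in_lann (R : pzRingType) (x z : R) : Prop := z * x = 0.
Definition in_rann (R : pzRingType) (x z : R) : Prop := x * z = 0.

Definition regular (R : pzRingType) (x : R) : Prop := exists z : R, x = x * z * x.

Definition bc_inverse (R : pzRingType) (a b c y : R) : Prop :=
  (exists u : R, y = b * u * y) /\ (exists v : R, y = y * v * c) /\
  y * a * b = b /\ c * a * y = c.

Definition hybrid_bc_inverse (R : pzRingType) (a b c y : R) : Prop :=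
  y * a * y = y /\
  (forall z : R, in_rideal y z <-> in_rideal b z) /\
  (forall z : R, in_rann y z <-> in_rann c z).

Definition annihilator_bc_inverse (R : pzRingType) (a b c y : R) : Prop :=
  y * a * y = y /\
  (forall z : R, in_lann y z <-> in_lann b z) /\
  (forall z : R, in_rann y z <-> in_rann c z).

From HB Require Import structures.
From mathcomp Require Import all_boot all_order all_algebra.
Local Open Scope ring_scope.
Import GRing.Theory.

(* Each annihilator inclusion turns an identity [p y = q y] (resp. [y p = y q])
   into the same identity with [y] replaced by [b] (resp. [c]); this gives
   [yab = b] and [cay = c] from [yay = y].  If [t s t = t] for [t = cab], the
   same transfer gives [b s t = b] and then [y = b s c], which exhibits [y] in
   [bRy] and [yRc]. *)

Section Annihilators.
Variable R : pzRingType.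
Implicit Types x w p q : R.

Lemma in_lann_mulr x w z : in_lann x z -> in_lann (x * w) z.
Proof. by rewrite /in_lann mulrA => ->; rewrite mul0r. Qed.

Lemma in_rann_mull x w z : in_rann x z -> in_rann (w * x) z.
Proof. by rewrite /in_rann -mulrA => ->; rewrite mulr0. Qed.

Lemma lann_transfer x x' p q :
  (forall z, in_lann x z -> in_lann x' z) -> p * x = q * x -> p * x' = q * x'.
Proof.
move=> sub_lann eq_x; apply/eqP; rewrite -subr_eq0 -mulrBl; apply/eqP/sub_lann.
by rewrite /in_lann mulrBl eq_x subrr.
Qed.

Lemma rann_transfer x x' p q :
  (forall z, in_rann x z -> in_rann x' z) -> x * p = x * q -> x' * p = x' * q.
Proof.
move=> sub_rann eq_x; apply/eqP; rewrite -subr_eq0 -mulrBr; apply/eqP/sub_rann.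
by rewrite /in_rann mulrBr eq_x subrr.
Qed.

Lemma rideal_eq_lann_eq x x' :
  (forall z, in_rideal x z <-> in_rideal x' z) ->
  forall z, in_lann x z <-> in_lann x' z.
Proof.
move=> eq_rideal z.
have [u def_x] : in_rideal x' x by apply/eq_rideal; exists 1; rewrite mulr1.
have [w def_x'] : in_rideal x x' by apply/eq_rideal; exists 1; rewrite mulr1.
by split; [rewrite def_x' | rewrite def_x]; apply: in_lann_mulr.
Qed.

End Annihilators.

Section BCInverses.
Variables (R : pzRingType) (a b c y : R).

Lemma bc_inverse_hybrid : bc_inverse a b c y -> hybrid_bc_inverse a b c y.
Proof.
move=> [[u def_y] [[v def_y'] [yab_b cay_c]]].
have yay_y : y * a * y = y by rewrite {2}def_y !mulrA yab_b -def_y.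
split=> //; split=> z; split.
- by move=> [w ->]; exists (u * y * w); rewrite {1}def_y !mulrA.
- by move=> [w ->]; exists (a * b * w); rewrite !mulrA yab_b.
- by rewrite -cay_c; apply: in_rann_mull.
- by rewrite def_y'; apply: in_rann_mull.
Qed.

Lemma hybrid_annihilator :
  hybrid_bc_inverse a b c y -> annihilator_bc_inverse a b c y.
Proof.
move=> [yay_y [eq_rideal eq_rann]].
by split; last split; first exact: yay_y; [exact: rideal_eq_lann_eq | exact: eq_rann].
Qed.

Hypothesis ann : annihilator_bc_inverse a b c y.

Lemma annihilator_absorb : y * a * b = b /\ c * a * y = c.
Proof.
have [yay_y [eq_lann eq_rann]] := ann.
split.
- rewrite -[b in RHS]mul1r; apply: lann_transfer (fun z => (eq_lann z).1) _.
  by rewrite mul1r yay_y.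
- rewrite -[c in RHS]mulr1 -mulrA; apply: rann_transfer (fun z => (eq_rann z).1) _.
  by rewrite mulr1 mulrA yay_y.
Qed.

Lemma annihilator_factor s : c * a * b * s * (c * a * b) = c * a * b -> y = b * s * c.
Proof.
move=> tst_t; have [_ [eq_lann eq_rann]] := ann.
have [yab_b cay_c] := annihilator_absorb.
have bst_b : b * s * (c * a * b) = b.
  have : y * (a * b * s * (c * a * b)) = y * (a * b).
    apply: rann_transfer (fun z => (eq_rann z).2) _.
    by rewrite !mulrA -[in RHS]tst_t !mulrA.
  by rewrite !mulrA yab_b.
have bsca_y : b * s * c * a * y = y.
  rewrite -[y in RHS]mul1r; apply: lann_transfer (fun z => (eq_lann z).2) _.
  by rewrite mul1r -!mulrA -[RHS]bst_b !mulrA.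
by rewrite -[LHS]bsca_y -[in RHS]cay_c !mulrA.
Qed.

Lemma annihilator_bc_inverse_regular :
  regular (c * a * b) -> bc_inverse a b c y.
Proof.
move=> [s t_reg]; have [yay_y _] := ann; have [yab_b cay_c] := annihilator_absorb.
have def_y := annihilator_factor s (esym t_reg).
split; first by exists (s * c * a); rewrite !mulrA -def_y yay_y.
split; first by exists (a * b * s); rewrite !mulrA yab_b -def_y.
by split.
Qed.

End BCInverses.

Theorem theorem3p10 (R : pzRingType) (a b c y : R)
  (ht : regular (c * a * b)) :
  (bc_inverse a b c y <-> hybrid_bc_inverse a b c y) /\
  (hybrid_bc_inverse a b c y <-> annihilator_bc_inverse a b c y).
Proof.
have ann_bc := @annihilator_bc_inverse_regular R a b c y.
split; split.
- exact: bc_inverse_hybrid.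
- by move=> /hybrid_annihilator /ann_bc; apply.
- exact: hybrid_annihilator.
- by move=> /ann_bc /(_ ht) /bc_inverse_hybrid.
Qed.
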